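(* Let $\Gamma$ be a telescopic numerical semigroup minimally generated by $r_0<\cdots<r_h$ with $h\ge 2$, let $c=\mathrm c(\Gamma)$ and $d_h=\gcd(r_0,\ldots,r_{h-1})$. Then $$2^{h+1}-1\le r_h\le \frac{c}{d_h-1}-\big((h-2)2^h+2\big)\frac{d_h}{d_h-1}+1\le c-(h-2)2^h-1.$$
   Context: A numerical semigroup is a submonoid of $(\mathbb N,+)$ with finite complement in $\mathbb N$; it has a unique minimal generating system. $\mathrm F(\Gamma)$ is the largest integer not in $\Gamma$, and $\mathrm c(\Gamma)=\mathrm F(\Gamma)+1$. $\langle X\rangle$ is the submonoid generated by $X$. For an arrangement $(r_0,\ldots,r_h)$ of the minimal generators, set $d_k=\gcd(r_0,\ldots,r_{k-1})$. A set $A$ of positive integers with nontrivial partition $A=A_1\cup A_2$ is the gluing of $A_1$ and $A_2$ if $\mathrm{lcm}(\gcd A_1,\gcd A_2)\in\langle A_1\rangle\cap\langle A_2\rangle$. $\Gamma$ is free for $(r_0,\ldots,r_h)$ if $h=0$, or $h\ge1$, $\{r_0,\ldots,r_h\}$ is the gluing of $\{r_0,\ldots,r_{h-1}\}$ and $\{r_h\}$, and $\langle r_0/d_h,\ldots,r_{h-1}/d_h\rangle$ is free for $(r_0/d_h,\ldots,r_{h-1}/d_h)$. $\Gamma$ is telescopic if it is free for the arrangement of its minimal generators in increasing order. *)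

From mathcomp Require Import all_boot all_order all_algebra.
Set Implicit Arguments. Unset Strict Implicit. Unset Printing Implicit Defensive.

Inductive in_monoid (A : seq nat) : nat -> Prop :=
| in_monoid0 : in_monoid A 0
| in_monoidD a n : a \in A -> in_monoid A n -> in_monoid A (a + n).

Definition numerical_semigroup (G : nat -> Prop) : Prop :=
  [/\ G 0, (forall a b, G a -> G b -> G (a + b))
    & exists N, forall n, N <= n -> G n].

Definition minimal_generating_system (G : nat -> Prop) (A : seq nat) : Prop :=
  [/\ uniq A, (forall n, G n <-> in_monoid A n)
    & forall a, a \in A -> ~ in_monoid (rem a A) a].

Definition gcd_seq (s : seq nat) : nat := foldr gcdn 0 s.

Definition is_conductor (G : nat -> Prop) (c : nat) : Prop :=
  (forall n, c <= n -> G n) /\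
  (forall m, (forall n, m <= n -> G n) -> c <= m).

Definition glued (A1 A2 : seq nat) : Prop :=
  in_monoid A1 (lcmn (gcd_seq A1) (gcd_seq A2)) /\
  in_monoid A2 (lcmn (gcd_seq A1) (gcd_seq A2)).

Fixpoint free_fuel (k : nat) (r : seq nat) : Prop :=
  match k with
  | 0 => False
  | k'.+1 =>
      size r = 1 \/
      (1 < size r /\
       let p := take (size r).-1 r in
       let d := gcd_seq p in
       glued p [:: last 0 r] /\ free_fuel k' (map (fun x => x %/ d) p))
  end.

Definition free_for (r : seq nat) : Prop := free_fuel (size r) r.

Definition telescopic (G : nat -> Prop) (r : seq nat) : Prop :=
  minimal_generating_system G r /\ sorted ltn r /\ free_for r.

(* Write the generators as [rcons p r_h] and let d = gcd p. The gluing condition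
   makes p / d telescopic again, with d >= 2 (otherwise r_h would lie in <p>),
   gcd(d, r_h) = 1 and r_h in <p / d>. By induction on h:
   - r_h > r_(h-1) = d (r_(h-1) / d) >= 2 (2^h - 1);
   - if g is a gap of <p / d>, then d g + (d - 1) r_h is a gap of <p, r_h>;
     starting from the gap 1 of a two-generated semigroup this yields a gap
     above (h - 2) 2^h.
   Applied to p / d, the second point gives a gap of Γ at least
   d ((h - 2) 2^h + 1) + (d - 1) r_h, which is below c; solving for r_h gives
   the rational bound. *)

From mathcomp Require Import all_boot all_order all_algebra.
From mathcomp Require Import zify ring lra.
Import Order.TTheory GRing.Theory Num.Theory.
Set Implicit Arguments. Unset Strict Implicit. Unset Printing Implicit Defensive.

Section Monoid.
Implicit Types (A p : seq nat) (d k n r : nat).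

Lemma in_monoid_mem A a : a \in A -> in_monoid A a.
Proof. by move=> Aa; rewrite -[a]addn0; apply: in_monoidD Aa (in_monoid0 _). Qed.

Lemma in_monoid_add A m n : in_monoid A m -> in_monoid A n -> in_monoid A (m + n).
Proof.
elim=> [|a k Aa _ IH] An //; rewrite -addnA; exact: in_monoidD Aa (IH An).
Qed.

Lemma in_monoid_mull A k n : in_monoid A n -> in_monoid A (k * n).
Proof.
move=> An; elim: k => [|k IH]; first exact: in_monoid0.
by rewrite mulSn; apply: in_monoid_add.
Qed.

Lemma sub_in_monoid A B n : {subset A <= B} -> in_monoid A n -> in_monoid B n.
Proof.
move=> sAB; elim=> [|a m Aa _ IH]; first exact: in_monoid0.
exact: in_monoidD (sAB _ Aa) IH.
Qed.

Lemma in_monoid_dvdn A d n : {in A, forall a, d %| a} -> in_monoid A n -> d %| n.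
Proof. move=> dA; elim=> [|a m Aa _ IH]; [exact: dvdn0 | exact: dvdn_add (dA _ Aa) IH]. Qed.

Lemma in_monoid_divn A d n : {in A, forall a, d %| a} ->
  in_monoid A n -> in_monoid (map (divn^~ d) A) (n %/ d).
Proof.
move=> dA; elim=> [|a m Aa _ IH]; first by rewrite div0n; apply: in_monoid0.
by rewrite divnDl ?dA //; apply: in_monoidD IH; apply: map_f.
Qed.

Lemma in_monoid_divnK A d n : {in A, forall a, d %| a} ->
  in_monoid (map (divn^~ d) A) n -> in_monoid A (d * n).
Proof.
move=> dA; elim=> [|b m Ab _ IH]; first by rewrite muln0; apply: in_monoid0.
case/mapP: Ab => a Aa ->; rewrite mulnDr mulnC divnK ?dA //.
exact: in_monoidD.
Qed.

Lemma in_monoid_rcons p r n : in_monoid (rcons p r) n ->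
  exists m x, in_monoid p x /\ n = x + m * r.
Proof.
elim=> [|a k + _ [m [x [px ->]]]]; first by exists 0, 0; split; first exact: in_monoid0.
rewrite mem_rcons in_cons => /predU1P [->|pa].
- by exists m.+1, x; split; rewrite // mulSn addnCA.
- by exists m, (a + x); split; rewrite ?addnA //; apply: in_monoidD.
Qed.

Lemma in_monoid_neq1 A : {in A, forall a, 1 < a} -> ~ in_monoid A 1.
Proof. by move=> A_gt1 A1; inversion A1 as [|a m Aa]; have := A_gt1 a Aa; lia. Qed.

End Monoid.

Lemma gcd_seq_dvdn s a : a \in s -> gcd_seq s %| a.
Proof.
elim: s => //= x s IH; rewrite in_cons => /predU1P [->|sa]; first exact: dvdn_gcdl.
exact: dvdn_trans (dvdn_gcdr _ _) (IH sa).
Qed.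

Lemma gcd_seq_rcons p r : gcd_seq (rcons p r) = gcdn (gcd_seq p) r.
Proof. by elim: p => [|x p IH] /=; rewrite ?gcdn0 ?gcd0n // IH gcdnA. Qed.

Lemma gcd_seq_map_divn p d : {in p, forall a, d %| a} ->
  gcd_seq (map (divn^~ d) p) * d = gcd_seq p.
Proof.
elim: p => [|x p IH] //= dp; rewrite muln_gcdl divnK ?dp ?mem_head // IH //.
by move=> a pa; apply: dp; rewrite in_cons pa orbT.
Qed.

Lemma sorted_map_divn p d : 0 < d -> {in p, forall a, d %| a} ->
  sorted ltn p -> sorted ltn (map (divn^~ d) p).
Proof.
move=> d_gt0 dp; rewrite sorted_map; apply: sub_in_sorted; last by apply/allP => a; exact: dp.
by move=> a b da db lt_ab; rewrite /= ltn_divRL // divnK.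
Qed.

Lemma not_in_monoid_rcons p r d g : 0 < d -> {in p, forall a, d %| a} ->
  coprime d r -> in_monoid (map (divn^~ d) p) r ->
  ~ in_monoid (map (divn^~ d) p) g -> ~ in_monoid (rcons p r) (d * g + (d - 1) * r).
Proof.
move=> d_gt0 dp cop_dr qr qg /in_monoid_rcons [m [x [px]]].
have /dvdnP [y xE] := in_monoid_dvdn dp px.
have qy : in_monoid (map (divn^~ d) p) y.
  by have := in_monoid_divn dp px; rewrite xE mulnK.
rewrite {x px}xE; case: (leqP (d - 1) m) => [le_dm | lt_md] E.
(* d divides (m - (d - 1)) r, resp. (d - 1 - m) r, hence m - (d - 1), resp. d - 1 - m. *)
- have gE : d * g = y * d + (m - (d - 1)) * r.
    by rewrite mulnBl; have := leq_mul le_dm (leqnn r); lia.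
  have /dvdnP [t kE] : d %| m - (d - 1).
    rewrite -(Gauss_dvdl _ cop_dr) -(dvdn_addr _ (dvdn_mull y (dvdnn d))) -gE.
    exact: dvdn_mulr.
  apply: qg; have -> : g = y + t * r.
    by apply/eqP; rewrite -(eqn_pmul2l d_gt0) gE kE; apply/eqP; ring.
  exact: in_monoid_add qy (in_monoid_mull t qr).
- have yE : d * g + (d - 1 - m) * r = y * d.
    by rewrite mulnBl; have := leq_mul (ltnW lt_md) (leqnn r); lia.
  have : d %| d - 1 - m.
    rewrite -(Gauss_dvdl _ cop_dr) -(dvdn_addr _ (dvdn_mulr g (dvdnn d))) yE.
    exact: dvdn_mull.
  by move/dvdn_leq; lia.
Qed.

Definition independent (s : seq nat) :=
  forall k, k < size s -> ~ in_monoid (take k s) (nth 0 s k).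

Lemma independent_rcons p r :
  independent (rcons p r) <-> independent p /\ ~ in_monoid p r.
Proof.
have take_p k : k <= size p -> take k (rcons p r) = take k p.
  by move=> le_kp; rewrite -cats1 takel_cat.
have last_ind : ~ in_monoid (take (size p) (rcons p r)) (nth 0 (rcons p r) (size p)) <->
    ~ in_monoid p r by rewrite take_p // take_size nth_rcons ltnn eqxx.
split=> [ind_pr | [ind_p p_r] k].
  split; last by apply/last_ind/ind_pr; rewrite size_rcons.
  move=> k lt_kp; have le_kp := ltnW lt_kp.
  by have := ind_pr k; rewrite size_rcons ltnS take_p // nth_rcons lt_kp; apply.
rewrite size_rcons ltnS leq_eqVlt => /predU1P [->|lt_kp]; first exact/last_ind.
by rewrite take_p ?nth_rcons ?lt_kp 1?ltnW //; apply: ind_p.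
Qed.

Lemma independent_gt0 s a : independent s -> a \in s -> 0 < a.
Proof.
move=> ind_s sa; rewrite lt0n; apply/eqP => a0.
by apply: (ind_s (index a s)); rewrite ?index_mem // nth_index // a0; apply: in_monoid0.
Qed.

Lemma independent_map_divn p d : {in p, forall a, d %| a} ->
  independent p -> independent (map (divn^~ d) p).
Proof.
move=> dp ind_p k; rewrite size_map => lt_kp; rewrite -map_take (nth_map 0) //.
have dtake : {in take k p, forall a, d %| a} by move=> a /mem_take; apply: dp.
move/(in_monoid_divnK dtake); rewrite mulnC divnK ?dp ?mem_nth //.
exact: ind_p.
Qed.

(* Unlike [telescopic], this is inherited by [p / gcd p] from [rcons p r]
   (telescopic_seq_prefix), so it supports induction on the number of generators. *)
Definition telescopic_seq (s : seq nat) :=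
  [/\ sorted ltn s, free_for s, gcd_seq s = 1 & independent s].

Lemma gcd_seq_eq1 s N : (forall n, N <= n -> in_monoid s n) -> gcd_seq s = 1.
Proof.
move=> sN; have dvd_s n : N <= n -> gcd_seq s %| n.
  by move=> le_Nn; apply: in_monoid_dvdn (sN n le_Nn) => a; apply: gcd_seq_dvdn.
by apply/eqP; rewrite -dvdn1 -(dvdn_addr 1 (dvd_s N (leqnn N))) addn1 dvd_s.
Qed.

Lemma independent_minimal s : uniq s ->
  (forall a, a \in s -> ~ in_monoid (rem a s) a) -> independent s.
Proof.
move=> uniq_s min_s k lt_ks; have s_k := mem_nth 0 lt_ks.
move/sub_in_monoid => take_k; apply: (min_s _ s_k); apply: take_k => y y_k.
rewrite rem_filter // mem_filter (mem_take y_k) andbT /=.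
apply/eqP => yE; move: y_k; rewrite yE in_take // index_uniq //.
by rewrite ltnn.
Qed.

Lemma telescopic_seq_of_telescopic G s : numerical_semigroup G -> telescopic G s -> telescopic_seq s.
Proof.
move=> [_ _ [N GN]] [[uniq_s Gs min_s] [sorted_s free_s]]; split=> //.
- by apply: (gcd_seq_eq1 (N := N)) => n /GN /Gs.
- exact: independent_minimal.
Qed.

Lemma last_lt_rcons p r : p != [::] -> sorted ltn (rcons p r) -> last 0 p < r.
Proof. by case: p => // x p _; rewrite /= rcons_path => /andP []. Qed.

Section Gluing.
Variables (p : seq nat) (r : nat).
Hypotheses (tele : telescopic_seq (rcons p r)) (p_nil : p != [::]).
Let d := gcd_seq p.

Lemma gluing_prefix : glued p [:: r] /\ free_for (map (divn^~ d) p).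
Proof.
case: tele => _ + _ _; rewrite /free_for size_rcons /= size_rcons => -[|[_]].
  by move/eqP; rewrite eqSS size_eq0 (negPf p_nil).
by rewrite -cats1 take_size_cat // last_cat size_map.
Qed.

Lemma gcd_prefix_gt0 : 0 < d.
Proof.
have p0 : nth 0 p 0 \in p by rewrite mem_nth // lt0n size_eq0.
have /independent_rcons [ind_p _] : independent (rcons p r) by case: tele.
by have := gcd_seq_dvdn p0; apply: dvdn_gt0; apply: independent_gt0 ind_p p0.
Qed.

Lemma coprime_gcd_prefix : coprime d r.
Proof. by rewrite /coprime -gcd_seq_rcons; case: tele => _ _ ->. Qed.

Lemma prefix_in_monoid_mul : in_monoid p (d * r).
Proof.
have [[pdr _] _] := gluing_prefix; move: pdr.
by rewrite /= gcdn0 /lcmn -/d (eqP coprime_gcd_prefix) divn1.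
Qed.

Lemma gcd_prefix_gt1 : 1 < d.
Proof.
rewrite ltn_neqAle gcd_prefix_gt0 andbT; apply/eqP => d1.
have /independent_rcons [_] : independent (rcons p r) by case: tele.
by apply; rewrite -[r]mul1n d1; apply: prefix_in_monoid_mul.
Qed.

Lemma last_in_monoid_prefix : in_monoid (map (divn^~ d) p) r.
Proof.
rewrite -(mulKn r gcd_prefix_gt0).
exact: in_monoid_divn (@gcd_seq_dvdn p) prefix_in_monoid_mul.
Qed.

Lemma telescopic_seq_prefix : telescopic_seq (map (divn^~ d) p).
Proof.
have dp : {in p, forall a, d %| a} by move=> a; apply: gcd_seq_dvdn.
case: tele => sorted_pr _ _ /independent_rcons [ind_p _]; split.
- apply: sorted_map_divn gcd_prefix_gt0 dp _.
  by move: sorted_pr; rewrite -cats1 => /cat_sorted2 [].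
- exact: gluing_prefix.2.
- by apply/eqP; rewrite -(eqn_pmul2r gcd_prefix_gt0) gcd_seq_map_divn // mul1n.
- exact: independent_map_divn.
Qed.

Lemma gluing_gap g : ~ in_monoid (map (divn^~ d) p) g ->
  ~ in_monoid (rcons p r) (d * g + (d - 1) * r).
Proof.
apply: not_in_monoid_rcons gcd_prefix_gt0 _ coprime_gcd_prefix last_in_monoid_prefix.
by move=> a; apply: gcd_seq_dvdn.
Qed.

End Gluing.

Lemma telescopic_seq_last_ge s : telescopic_seq s -> 2 ^ size s - 1 <= last 0 s.
Proof.
move size_s: (size s) => n; elim: n s size_s => [|n IH] s; first by rewrite expn0.
case/lastP: s => [|p r] //; rewrite size_rcons last_rcons => -[size_p] tele.
have [p0|p_nil] := eqVneq p [::].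
  rewrite p0 /= in size_p tele; rewrite -size_p expn1; case: tele => _ _ _ ind_r.
  by apply: independent_gt0 ind_r _; rewrite mem_head.
have d_gt1 := gcd_prefix_gt1 tele p_nil; set d := gcd_seq p in d_gt1 *.
have last_lt : last 0 p < r by apply: last_lt_rcons p_nil _; case: tele.
have := IH _ _ (telescopic_seq_prefix tele p_nil); rewrite size_map => /(_ size_p).
have -> : last 0 (map (divn^~ d) p) = last 0 p %/ d.
  by rewrite -(last_map (divn^~ d) p 0) div0n.
have dl : d %| last 0 p.
  by rewrite -nth_last; apply: gcd_seq_dvdn; rewrite mem_nth // ltn_predL lt0n size_eq0.
move=> le_q; rewrite -(divnK dl) in last_lt; set q := last 0 p %/ d in le_q last_lt.
have : 2 * q <= q * d by rewrite mulnC leq_mul2l d_gt1 orbT.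
rewrite expnS; lia.
Qed.

Lemma telescopic_seq_gap s : telescopic_seq s -> 1 < size s ->
  exists2 g, ~ in_monoid s g & (size s - 2) * 2 ^ size s < g.
Proof.
move=> + s_gt1; have [n sE] : exists n, size s = n.+2 by exists (size s).-2; lia.
rewrite sE subn2 /= {s_gt1}; elim: n s sE => [|n IH] s.
  case: s => [|a [|b []]] //= _ [sorted_ab _ _ ind_ab]; exists 1 => //.
  have a_gt0 : 0 < a by apply: independent_gt0 ind_ab _; rewrite mem_head.
  have a_neq1 : a != 1.
    apply/eqP => a1; have := ind_ab 1 isT; rewrite /= a1; apply.
    by rewrite -[b]muln1; apply/in_monoid_mull/in_monoid_mem/mem_head.
  have ab_gt1 : {in [:: a; b], forall x, 1 < x}.
    by move=> x; rewrite !inE => /pred2P [] ->; move: sorted_ab => /=; lia.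
  exact: in_monoid_neq1 ab_gt1.
case/lastP: s => [|p r] //; rewrite size_rcons => -[size_p] tele.
have p_nil : p != [::] by rewrite -size_eq0 size_p.
have d_gt1 := gcd_prefix_gt1 tele p_nil; set d := gcd_seq p in d_gt1 *.
have [g q_g lt_g] := IH _ (etrans (size_map _ _) size_p) (telescopic_seq_prefix tele p_nil).
exists (d * g + (d - 1) * r); first exact: gluing_gap.
have := telescopic_seq_last_ge tele; rewrite size_rcons last_rcons size_p.
have : 2 * g <= d * g by rewrite leq_mul2r d_gt1 orbT.
have : r <= (d - 1) * r by rewrite leq_pmull // subn_gt0.
have -> : n.+1 * 2 ^ n.+3 = 2 * (n * 2 ^ n.+2) + 2 * 2 ^ n.+2 by rewrite expnS; ring.
rewrite [2 ^ n.+3]expnS; lia.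
Qed.

Section RationalBounds.
Local Open Scope ring_scope.
Variables (R : realFieldType) (c d x K : nat).
Hypothesis d_gt1 : (1 < d)%N.

Let dB1_gt0 : 0 < d%:R - 1 :> R.
Proof. by rewrite subr_gt0 ltr1n. Qed.

Let boundE : c%:R / (d%:R - 1) - (K + 2)%:R * d%:R / (d%:R - 1) + 1 =
    (c%:R - (K + 2)%:R * d%:R + (d%:R - 1)) / (d%:R - 1) :> R.
Proof. by field; rewrite lt0r_neq0. Qed.

Lemma ler_telescopic_bound : (d * (K + 1) + (d - 1) * x + 1 <= c)%N ->
  x%:R <= c%:R / (d%:R - 1) - (K + 2)%:R * d%:R / (d%:R - 1) + 1 :> R.
Proof.
move=> le_c; rewrite boundE ler_pdivlMr //.
by move: le_c; rewrite -(ler_nat R) !natrD !natrM natrB ?(ltnW d_gt1) //; lra.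
Qed.

Lemma telescopic_bound_le_conductor :
  c%:R / (d%:R - 1) - (K + 2)%:R * d%:R / (d%:R - 1) + 1 <= c%:R - K%:R - 1 :> R.
Proof.
have d_ge2 : 2 <= d%:R :> R by rewrite ler_nat.
have c_ge0 : 0 <= c%:R :> R := ler0n _ _.
have K_ge0 : 0 <= K%:R :> R := ler0n _ _.
by rewrite boundE ler_pdivrMr // natrD; nra.
Qed.

End RationalBounds.

Theorem corollary4p3 (G : nat -> Prop) (r : seq nat) (h c : nat) :
  numerical_semigroup G ->
  minimal_generating_system G r ->
  sorted ltn r ->
  size r = h.+1 ->
  2 <= h ->
  telescopic G r ->
  is_conductor G c ->
  let rh := nth 0 r h in
  let dh := gcd_seq (take h r) in
  (2 ^ h.+1 - 1 <= rh)%N /\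
  ((rh%:R : rat) <= (c%:R / (dh%:R - 1)
     - ((h - 2) * 2 ^ h + 2)%:R * dh%:R / (dh%:R - 1) + 1))%R /\
  ((c%:R / (dh%:R - 1)
     - ((h - 2) * 2 ^ h + 2)%:R * dh%:R / (dh%:R - 1) + 1 : rat)
   <= c%:R - ((h - 2) * 2 ^ h)%:R - 1)%R.
Proof.
move=> semi_G [_ G_r _] _ size_r h_ge2 tele_G [G_c _] rh dh; rewrite {}/rh {}/dh.
have tele := telescopic_seq_of_telescopic semi_G tele_G.
have gap_lt_c n : ~ in_monoid r n -> n < c.
  by move=> r_n; rewrite ltnNge; apply/negP => /G_c /G_r.
case/lastP: r size_r tele gap_lt_c {G_r tele_G} => [|p x] //.
rewrite size_rcons => -[size_p] tele gap_lt_c.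
rewrite nth_rcons -size_p ltnn eqxx -cats1 take_size_cat // size_p.
have p_nil : p != [::] by rewrite -size_eq0 size_p -lt0n ltnW.
have d_gt1 := gcd_prefix_gt1 tele p_nil; set d := gcd_seq p in d_gt1 *.
have size_q : 1 < size (map (divn^~ d) p) by rewrite size_map size_p.
have [g q_g] := telescopic_seq_gap (telescopic_seq_prefix tele p_nil) size_q.
rewrite size_map size_p => lt_g.
have lt_c := gap_lt_c _ (gluing_gap tele p_nil q_g).
split; first by have := telescopic_seq_last_ge tele; rewrite size_rcons size_p last_rcons.
split; last exact: telescopic_bound_le_conductor.
apply: ler_telescopic_bound => //.
have : d * ((h - 2) * 2 ^ h + 1) <= d * g by rewrite leq_mul2l addn1 lt_g orbT.
lia.
Qed.
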